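(* Consider the generalized nested logit (GNL) model with $K$ nests, nest parameters $0<\lambda_k\le1$ ($k=1,\dots,K$), and allocation parameters $\alpha_{ik}\ge0$ with $\sum_{k=1}^K\alpha_{ik}=1$ for every $i\in A$. Let $T\ge1$, let $u_1,\dots,u_T$ be arbitrary payoff vectors with $\|u_t\|_\infty\le u_{\max}$, and set $$\eta=\sqrt{\frac{\big(\tfrac{2}{\min_k\lambda_k}-1\big)T u_{\max}^2}{2\log N}}.$$ Then the regret of the GNL-SSA satisfies $$R^T_{SSA}\le u_{\max}\sqrt{2\log N\Big(\frac{2}{\min_k\lambda_k}-1\Big)T}.$$
   Context: $N\ge2$, $A=\{1,\dots,N\}$, $\Delta_N=\{x\in\mathbb{R}^N:x_i\ge0,\sum_ix_i=1\}$. The GNL generator is $G(y)=\sum_{k=1}^K\big(\sum_{i=1}^N(\alpha_{ik}y_i)^{1/\lambda_k}\big)^{\lambda_k}$ for $y\in\mathbb{R}^N_+$. Set $\theta_0=0$, $\theta_t=\sum_{s=1}^tu_s$, and $e^{\theta/\eta}=(e^{\theta_1/\eta},\dots,e^{\theta_N/\eta})$. The GNL-SSA chooses $x_t=\nabla\psi_\eta(\theta_{t-1})$, $t=1,\dots,T$, where $\psi_\eta(\theta)=\eta\log G(e^{\theta/\eta})$; equivalently $x_{t,j}=\sum_{k=1}^K P_{k}\,P_{j|k}$ with $P_k=e^{v_k}/\sum_{\ell}e^{v_\ell}$, $v_k=\lambda_k\log\sum_{i}(\alpha_{ik}e^{\theta_{i,t-1}/\eta})^{1/\lambda_k}$, and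 $P_{j|k}=(\alpha_{jk}e^{\theta_{j,t-1}/\eta})^{1/\lambda_k}/\sum_i(\alpha_{ik}e^{\theta_{i,t-1}/\eta})^{1/\lambda_k}$. The regret of a sequence $x_1,\dots,x_T\in\Delta_N$ is $R^T=\max_{x\in\Delta_N}\langle\theta_T,x\rangle-\sum_{t=1}^T\langle u_t,x_t\rangle$. *)

From mathcomp Require Import all_boot all_order all_algebra.
From mathcomp Require Import all_classical all_reals.
From mathcomp Require Import sequences exp.
Set Implicit Arguments. Unset Strict Implicit. Unset Printing Implicit Defensive.
Import Order.TTheory GRing.Theory Num.Theory.
Local Open Scope ring_scope.

Section GNL.
Variables (R : realType) (N K : nat).
Variables (alpha : 'I_N -> 'I_K -> R) (lam : 'I_K -> R) (eta : R).

(* cumulative payoff theta_t = sum_{s=1}^t u_s ; payoffs indexed u 1, ..., u T *)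
Definition theta (u : nat -> 'I_N -> R) (t : nat) (i : 'I_N) : R :=
  \sum_(1 <= s < t.+1) u s i.

(* S_k(theta) = sum_i (alpha_ik e^{theta_i/eta})^{1/lambda_k};
   e^{v_k} = S_k^{lambda_k} *)
Definition nest_sum (th : 'I_N -> R) (k : 'I_K) : R :=
  \sum_(i < N) powR (alpha i k * expR (th i / eta)) (lam k)^-1.

Definition nest_weight (th : 'I_N -> R) (k : 'I_K) : R :=
  powR (nest_sum th k) (lam k).

Definition P_nest (th : 'I_N -> R) (k : 'I_K) : R :=
  nest_weight th k / \sum_(l < K) nest_weight th l.

Definition P_cond (th : 'I_N -> R) (j : 'I_N) (k : 'I_K) : R :=
  powR (alpha j k * expR (th j / eta)) (lam k)^-1 / nest_sum th k.

(* GNL choice probabilities = grad psi_eta(theta) *)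
Definition gnl_choice (th : 'I_N -> R) (j : 'I_N) : R :=
  \sum_(k < K) P_nest th k * P_cond th j k.

Definition gnl_ssa (u : nat -> 'I_N -> R) (t : nat) : 'I_N -> R :=
  gnl_choice (theta u t.-1).

End GNL.

Definition in_simplex (R : realType) (N : nat) (x : 'I_N -> R) : Prop :=
  (forall i, 0 <= x i) /\ \sum_(i < N) x i = 1.

Definition inner (R : realType) (N : nat) (a b : 'I_N -> R) : R :=
  \sum_(i < N) a i * b i.

Definition regret_le (R : realType) (N T : nat) (u : nat -> 'I_N -> R)
  (xs : nat -> 'I_N -> R) (B : R) : Prop :=
  forall x : 'I_N -> R, in_simplex x ->
    inner (theta u T) x - \sum_(1 <= t < T.+1) inner (u t) (xs t) <= B.

(* The regret is controlled through the potential psi(theta) = eta ln G(e^{theta/eta}),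
   whose gradient is the GNL choice probability.  Since G is a sum of homogeneous nest
   terms, max_j theta_j <= psi(theta) and psi(0) <= eta ln N.  Moving from theta to
   theta + u multiplies G(e^{theta/eta}) by the mixture
     sum_k P_k (sum_i P_{i|k} e^{c_i/lambda_k})^lambda_k,   c = u/eta.
   Replacing c by s c, the second derivative in s of the log of this mixture is at most a
   mixture of nest curvatures r^2 + (v - r^2)/lambda_k <= |c|_oo^2/lambda_min, so a
   second-order Taylor bound gives
     psi(theta + u) <= psi(theta) + <u, x> + u_max^2/(2 lambda_min eta).
   Summing over t gives R^T <= eta ln N + T u_max^2/(2 lambda_min eta), and since
   1/lambda_min <= 2/lambda_min - 1 the stated eta balances the two terms. *)

From mathcomp Require Import all_boot all_order all_algebra.
From mathcomp Require Import all_classical all_reals.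
From mathcomp Require Import topology normedtype sequences derive exp realfun.
From mathcomp Require Import ring lra.
Import Order.TTheory GRing.Theory Num.Theory.
Import numFieldNormedType.Exports.
Set Implicit Arguments. Unset Strict Implicit. Unset Printing Implicit Defensive.
Local Open Scope classical_set_scope.
Local Open Scope ring_scope.

Section Calculus.
Variable R : realType.
Implicit Types (f g : R -> R) (x : R).

Lemma is_derive_sum_pt n (F : 'I_n -> R -> R) (dF : 'I_n -> R) x :
  (forall k, is_derive x 1 (F k) (dF k)) ->
  is_derive x 1 (fun s => \sum_(k < n) F k s) (\sum_(k < n) dF k).
Proof. by move=> H; rewrite -fct_sumE; apply: is_derive_sum. Qed.

Lemma is_derive_mul_pt f g df dg x :
  is_derive x 1 f df -> is_derive x 1 g dg ->
  is_derive x 1 (fun s => f s * g s) (f x * dg + g x * df).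
Proof. exact: is_deriveM. Qed.

Lemma is_derive_scale_pt f df a x :
  is_derive x 1 f df -> is_derive x 1 (fun s => a * f s) (a * df).
Proof. exact: is_deriveZ. Qed.

Lemma is_derive_mulr_id a x : is_derive x 1 (fun s => s * a) a.
Proof.
have -> : (fun s : R => s * a) = a *: id by apply/funext => s; rewrite mulrC.
by apply: is_derive_eq; rewrite -[a *: 1]/(a * 1) mulr1.
Qed.

Lemma is_derive_expR_pt f df x :
  is_derive x 1 f df -> is_derive x 1 (fun s => expR (f s)) (expR (f x) * df).
Proof. exact: is_derive1_comp. Qed.

Lemma is_derive_ln_pt f df x : 0 < f x ->
  is_derive x 1 f df -> is_derive x 1 (fun s => ln (f s)) (df / f x).
Proof.
by move=> fx f_der; have := is_derive1_comp (is_derive1_ln fx) f_der; rewrite mulrC.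
Qed.

Lemma is_derive_inv_pt f df x : f x != 0 ->
  is_derive x 1 f df -> is_derive x 1 (fun s => (f s)^-1) (- (f x) ^- 2 * df).
Proof. exact: is_deriveV. Qed.

Lemma is_derive_le0_le f (df : R -> R) a b :
  (forall x, is_derive x 1 f (df x)) -> (forall x, a <= x <= b -> df x <= 0) ->
  a <= b -> f b <= f a.
Proof.
move=> f_der df_le0 ab.
have f_cont : {within `[a, b], continuous f}.
  by apply: derivable_within_continuous => x _; case: (f_der x).
have [c /[!in_itv]/= c_ab fE] := MVT_segment ab (fun x _ => f_der x) f_cont.
by rewrite -subr_le0 fE mulr_le0_ge0 ?df_le0 ?subr_ge0.
Qed.

(* [f1 - C id] is nonincreasing on [0, 1], so [f - f1 0 id - C/2 id^2] has a
   nonpositive derivative there. *)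
Lemma taylor2_le f f1 f2 C :
  (forall x, is_derive x 1 f (f1 x)) -> (forall x, is_derive x 1 f1 (f2 x)) ->
  (forall x, 0 <= x <= 1 -> f2 x <= C) -> f 1 <= f 0 + f1 0 + C / 2.
Proof.
move=> f_der f1_der f2C.
have g_der x : is_derive x 1 (fun s => f1 s - s * C) (f2 x - C).
  exact: is_deriveB (f1_der x) (is_derive_mulr_id C x).
have g_le x : 0 <= x <= 1 -> f1 x - x * C <= f1 0 - 0 * C.
  case/andP=> x0 x1; apply: (@is_derive_le0_le _ _ 0 x g_der) x0 => y /andP[y0 yx].
  by rewrite subr_le0 f2C // y0 (le_trans yx x1).
have h_der x : is_derive x 1 (fun s => f s - s * f1 0 - s * (s * (C / 2)))
    (f1 x - f1 0 * 1 - x * C).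
  have := is_deriveB (is_deriveB (f_der x) (is_derive_mulr_id (f1 0) x))
    (is_derive_mul_pt (is_derive_id x 1) (is_derive_mulr_id (C / 2) x)).
  by move/is_derive_eq; apply => /=; field.
have h_le : f 1 - 1 * f1 0 - 1 * (1 * (C / 2)) <= f 0 - 0 * f1 0 - 0 * (0 * (C / 2)).
  apply: (@is_derive_le0_le _ _ 0 1 h_der) ler01 => x /g_le.
  by rewrite mul0r subr0 mulr1; lra.
lra.
Qed.

End Calculus.

Lemma ler_sum_term (R : numDomainType) n (F : 'I_n -> R) j :
  (forall i, 0 <= F i) -> F j <= \sum_(i < n) F i.
Proof. by move=> F0; rewrite (bigD1 j) //= lerDl sumr_ge0. Qed.

Lemma sum_mul_expR_gt0 (R : realType) n (p z : 'I_n -> R) :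
  (forall i, 0 <= p i) -> \sum_(i < n) p i = 1 -> 0 < \sum_(i < n) p i * expR (z i).
Proof.
move=> p0 p1; rewrite lt_def sumr_ge0 ?andbT => [|i _]; last first.
  by rewrite mulr_ge0 ?expR_ge0.
apply/negP => /eqP/psumr_eq0P pz0; move/eqP: p1.
rewrite big1 ?(eq_sym 0) ?oner_eq0 // => i _.
have /eqP := pz0 (fun j _ => mulr_ge0 (p0 j) (expR_ge0 _)) i isT.
by rewrite mulf_eq0 (gt_eqF (expR_gt0 _)) orbF => /eqP.
Qed.

Lemma curvature_term_le (R : realFieldType) (l a r v b : R) :
  0 < l -> l <= a -> a <= 1 -> 0 <= v -> v <= b -> r ^+ 2 + (v - r ^+ 2) / a <= b / l.
Proof.
move=> l_gt0 la a1 v0 vb; have a_gt0 : 0 < a := lt_le_trans l_gt0 la.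
have -> : r ^+ 2 + (v - r ^+ 2) / a = v / a - r ^+ 2 * (a^-1 - 1).
  by field; rewrite gt_eqF.
have h1 : 0 <= r ^+ 2 * (a^-1 - 1) by rewrite mulr_ge0 ?sqr_ge0 // subr_ge0 invf_ge1.
have h2 : v / a <= b / a by rewrite ler_pM2r ?invr_gt0.
have h3 : b / a <= b / l by rewrite ler_wpM2l ?(le_trans v0 vb) // lef_pV2 ?posrE.
lra.
Qed.

Section MixtureCurvature.
Variables (R : realType) (N K : nat) (q : 'I_K -> R) (pi : 'I_N -> 'I_K -> R)
  (lam : 'I_K -> R) (c : 'I_N -> R) (M l : R).
Hypotheses (q_ge0 : forall k, 0 <= q k) (q_sum1 : \sum_(k < K) q k = 1)
  (pi_ge0 : forall i k, 0 <= pi i k) (pi_sum1 : forall k, \sum_(i < N) pi i k = 1)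
  (l_gt0 : 0 < l) (l_le_lam : forall k, l <= lam k) (lam_le1 : forall k, lam k <= 1)
  (c_le : forall i, `|c i| <= M).

Implicit Types (k : 'I_K) (s x : R).

Let lam_gt0 k : 0 < lam k. Proof. exact: lt_le_trans (l_le_lam k). Qed.
Let lam_neq0 k : lam k != 0. Proof. by rewrite gt_eqF. Qed.

(* [tilt k s] is the moment generating function of [c / lam k] under [pi _ k] at [s];
   [tilt_mean k s] and [tilt2 k s / tilt k s] are the first two moments of [c] under the
   exponentially tilted law. *)
Definition tilt k s := \sum_(i < N) pi i k * expR (s * (c i / lam k)).
Definition tilt1 k s := \sum_(i < N) pi i k * (c i * expR (s * (c i / lam k))).
Definition tilt2 k s := \sum_(i < N) pi i k * (c i ^+ 2 * expR (s * (c i / lam k))).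
Definition tilt_mean k s := tilt1 k s / tilt k s.
Definition nest_pow k s := expR (lam k * ln (tilt k s)).
Definition mix s := \sum_(k < K) q k * nest_pow k s.
Definition mix1 s := \sum_(k < K) q k * (nest_pow k s * tilt_mean k s).
Definition mix2 s := \sum_(k < K) q k * (nest_pow k s *
  (tilt_mean k s ^+ 2 + (tilt2 k s / tilt k s - tilt_mean k s ^+ 2) / lam k)).

Lemma tilt_gt0 k s : 0 < tilt k s.
Proof. exact: sum_mul_expR_gt0. Qed.

Let tilt_neq0 k s : tilt k s != 0. Proof. by rewrite gt_eqF ?tilt_gt0. Qed.

Lemma mix_gt0 s : 0 < mix s.
Proof. exact: sum_mul_expR_gt0. Qed.

Lemma is_derive_tilt k x : is_derive x 1 (tilt k) (tilt1 k x / lam k).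
Proof.
have := is_derive_sum_pt (fun i => is_derive_scale_pt (pi i k)
  (is_derive_expR_pt (is_derive_mulr_id (c i / lam k) x))).
move/is_derive_eq; apply; rewrite /tilt1 mulr_suml; apply: eq_bigr => i _.
by rewrite -mulrA; congr (_ * _); rewrite mulrC mulrAC.
Qed.

Lemma is_derive_tilt1 k x : is_derive x 1 (tilt1 k) (tilt2 k x / lam k).
Proof.
have := is_derive_sum_pt (fun i => is_derive_scale_pt (pi i k) (is_derive_scale_pt (c i)
  (is_derive_expR_pt (is_derive_mulr_id (c i / lam k) x)))).
move/is_derive_eq; apply; rewrite /tilt2 mulr_suml; apply: eq_bigr => i _.
by rewrite -mulrA; congr (_ * _); rewrite expr2; field.
Qed.

Lemma is_derive_tilt_mean k x : is_derive x 1 (tilt_mean k)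
  ((tilt2 k x / tilt k x - tilt_mean k x ^+ 2) / lam k).
Proof.
have := is_derive_mul_pt (is_derive_tilt1 k x)
  (is_derive_inv_pt (tilt_neq0 k x) (is_derive_tilt k x)).
by move/is_derive_eq; apply; rewrite /tilt_mean; field; rewrite lam_neq0 tilt_neq0.
Qed.

Lemma is_derive_nest_pow k x : is_derive x 1 (nest_pow k) (nest_pow k x * tilt_mean k x).
Proof.
have := is_derive_expR_pt (is_derive_scale_pt (lam k)
  (is_derive_ln_pt (tilt_gt0 k x) (is_derive_tilt k x))).
move/is_derive_eq; apply; rewrite /tilt_mean; congr (_ * _).
by field; rewrite lam_neq0 tilt_neq0.
Qed.

Lemma is_derive_mix x : is_derive x 1 mix (mix1 x).
Proof.
exact: is_derive_sum_pt (fun k => is_derive_scale_pt (q k) (is_derive_nest_pow k x)).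
Qed.

Lemma is_derive_mix1 x : is_derive x 1 mix1 (mix2 x).
Proof.
have := is_derive_sum_pt (fun k => is_derive_scale_pt (q k)
  (is_derive_mul_pt (is_derive_nest_pow k x) (is_derive_tilt_mean k x))).
move/is_derive_eq; apply; apply: eq_bigr => k _; congr (_ * _).
by rewrite /=; ring.
Qed.

Lemma tilt2_le k s : tilt2 k s <= M ^+ 2 * tilt k s.
Proof.
rewrite /tilt2 /tilt mulr_sumr; apply: ler_sum => i _.
rewrite mulrCA ler_wpM2r ?mulr_ge0 ?expR_ge0 //.
by rewrite -real_normK ?num_real // lerXn2r ?nnegrE ?(le_trans _ (c_le i)).
Qed.

Lemma mix2_le s : mix2 s <= M ^+ 2 / l * mix s.
Proof.
rewrite /mix2 /mix mulr_sumr; apply: ler_sum => k _.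
rewrite [leRHS]mulrCA ler_wpM2l // [leRHS]mulrC ler_wpM2l ?expR_ge0 //.
apply: curvature_term_le => //.
  rewrite divr_ge0 ?(ltW (tilt_gt0 _ _)) //; apply: sumr_ge0 => i _.
  by rewrite mulr_ge0 ?pi_ge0 // mulr_ge0 ?sqr_ge0 ?expR_ge0.
by rewrite ler_pdivrMr ?tilt_gt0 ?tilt2_le.
Qed.

Lemma mix_curvature_le s : mix2 s / mix s - (mix1 s / mix s) ^+ 2 <= M ^+ 2 / l.
Proof.
by rewrite lerBlDr ler_wpDr ?sqr_ge0 // ler_pdivrMr ?mix_gt0 ?mix2_le.
Qed.

Lemma tilt0 k : tilt k 0 = 1.
Proof. by rewrite -(pi_sum1 k); apply: eq_bigr => i _; rewrite mul0r expR0 mulr1. Qed.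

Lemma mix0 : mix 0 = 1.
Proof.
by rewrite -q_sum1; apply: eq_bigr => k _; rewrite /nest_pow tilt0 ln1 mulr0 expR0 mulr1.
Qed.

Lemma is_derive_mix_ratio x :
  is_derive x 1 (fun s => mix1 s / mix s) (mix2 x / mix x - (mix1 x / mix x) ^+ 2).
Proof.
have mix_neq0 : mix x != 0 by rewrite gt_eqF ?mix_gt0.
have := is_derive_mul_pt (is_derive_mix1 x) (is_derive_inv_pt mix_neq0 (is_derive_mix x)).
by move/is_derive_eq; apply; field.
Qed.

Lemma ln_mix_le :
  ln (\sum_(k < K) q k * expR (lam k * ln (\sum_(i < N) pi i k * expR (c i / lam k))))
  <= \sum_(k < K) q k * \sum_(i < N) pi i k * c i + M ^+ 2 / l / 2.
Proof.
have := taylor2_le (fun x => is_derive_ln_pt (mix_gt0 x) (is_derive_mix x))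
  is_derive_mix_ratio (fun x _ => mix_curvature_le x).
have -> : mix 1 =
    \sum_(k < K) q k * expR (lam k * ln (\sum_(i < N) pi i k * expR (c i / lam k))).
  by apply: eq_bigr => k _; rewrite /nest_pow /tilt; under eq_bigr do rewrite mul1r.
have -> : mix1 0 = \sum_(k < K) q k * \sum_(i < N) pi i k * c i.
  apply: eq_bigr => k _; rewrite /nest_pow /tilt_mean tilt0 ln1 mulr0 expR0 mul1r divr1.
  by congr (_ * _); apply: eq_bigr => i _; rewrite mul0r expR0 mulr1.
by rewrite mix0 ln1 add0r divr1.
Qed.
End MixtureCurvature.

Lemma powR_invK (R : realType) (z a : R) : 0 <= z -> 0 < a -> powR (powR z a^-1) a = z.
Proof. by move=> z0 a0; rewrite -powRrM mulVf ?gt_eqF // powRr1. Qed.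

Lemma sum_powR_le (R : realType) n (a : 'I_n -> R) p : 1 <= p ->
  (forall i, 0 <= a i) -> \sum_(i < n) powR (a i) p <= powR (\sum_(i < n) a i) p.
Proof.
move=> p1 a0; have p_neq0 : p != 0 by rewrite gt_eqF // (lt_le_trans ltr01).
have s0 : 0 <= \sum_(i < n) a i by apply: sumr_ge0.
have [s_eq0|s_neq0] := eqVneq (\sum_(i < n) a i) 0.
  rewrite big1 ?powR_ge0 // => i _.
  by rewrite (psumr_eq0P (fun i _ => a0 i) s_eq0) // powR0.
set s := \sum_(i < n) a i in s0 s_neq0 *; have s_gt0 : 0 < s by rewrite lt_def s_neq0.
have aE i : powR (a i) p = powR s p * powR (a i / s) p.
  by rewrite -powRM ?divr_ge0 // mulrC divfK.
rewrite (eq_bigr _ (fun i _ => aE i)) -mulr_sumr ler_piMr ?powR_ge0 //.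
apply: le_trans (_ : \sum_(i < n) a i / s <= _); last by rewrite -mulr_suml divff.
apply: ler_sum => i _; have [->|ai_neq0] := eqVneq (a i) 0; first by rewrite mul0r powR0.
apply: ge1r_powR => //; rewrite divr_gt0 // ?lt_def ?ai_neq0 ?a0 //=.
by rewrite ler_pdivrMr // mul1r (ler_sum_term _ a0).
Qed.

Section GNLPotential.
Variables (R : realType) (N K : nat) (alpha : 'I_N -> 'I_K -> R) (lam : 'I_K -> R).
Variable eta : R.
Hypotheses (lam_gt0 : forall k, 0 < lam k) (lam_le1 : forall k, lam k <= 1)
  (alpha_ge0 : forall i k, 0 <= alpha i k)
  (alpha_sum1 : forall i, \sum_(k < K) alpha i k = 1)
  (N_gt0 : (0 < N)%N) (eta_gt0 : 0 < eta).
Implicit Types (th v : 'I_N -> R).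

Definition gnl_gen th := \sum_(k < K) nest_weight alpha lam eta th k.
Definition gnl_psi th := eta * ln (gnl_gen th).

Lemma expR_le_gnl_gen th j : expR (th j / eta) <= gnl_gen th.
Proof.
rewrite -[leLHS]mul1r -(alpha_sum1 j) mulr_suml; apply: ler_sum => k _.
rewrite -[leLHS](@powR_invK _ _ (lam k)) ?mulr_ge0 ?expR_ge0 //.
apply: ge0_ler_powR; rewrite ?nnegrE ?powR_ge0 ?(ltW (lam_gt0 k)) //.
- by apply: sumr_ge0 => i _; apply: powR_ge0.
- by apply: ler_sum_term => i; apply: powR_ge0.
Qed.

Lemma gnl_gen_gt0 th : 0 < gnl_gen th.
Proof. exact: lt_le_trans (expR_gt0 _) (expR_le_gnl_gen th (Ordinal N_gt0)). Qed.

Lemma le_gnl_psi th j : th j <= gnl_psi th.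
Proof.
rewrite /gnl_psi -ler_pdivrMl // -[leLHS]expRK ler_ln ?posrE ?expR_gt0 ?gnl_gen_gt0 //.
by rewrite mulrC expR_le_gnl_gen.
Qed.

Lemma gnl_gen0_le : gnl_gen (fun=> 0) <= N%:R.
Proof.
have <- : \sum_(k < K) \sum_(i < N) alpha i k = N%:R.
  by rewrite exchange_big /= (eq_bigr (fun=> 1)) ?sumr_const ?card_ord.
apply: ler_sum => k _; rewrite /nest_weight /nest_sum.
rewrite -[leRHS](@powR_invK _ _ (lam k)) ?sumr_ge0 //.
apply: ge0_ler_powR; rewrite ?nnegrE ?powR_ge0 ?(ltW (lam_gt0 k)) //.
  by apply: sumr_ge0 => i _; apply: powR_ge0.
under eq_bigr do rewrite mul0r expR0 mulr1.
by apply: sum_powR_le; rewrite // invf_ge1.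
Qed.

Lemma gnl_psi0_le : gnl_psi (fun=> 0) <= eta * ln N%:R.
Proof. by rewrite ler_pM2l // ler_ln ?posrE ?gnl_gen_gt0 ?ltr0n ?gnl_gen0_le. Qed.

(* A nest with [nest_sum th k = 0] has [P_nest th k = 0]; its conditional law is
   then replaced by the uniform one so that every nest carries a probability vector. *)
Definition nest_cond th i k :=
  if nest_sum alpha lam eta th k == 0 then N%:R^-1 else P_cond alpha lam eta th i k.

Lemma P_nest_ge0 th k : 0 <= P_nest alpha lam eta th k.
Proof. by rewrite divr_ge0 ?powR_ge0 ?(ltW (gnl_gen_gt0 th)). Qed.

Lemma P_nest_sum1 th : \sum_(k < K) P_nest alpha lam eta th k = 1.
Proof. by rewrite -mulr_suml divff ?gt_eqF ?(gnl_gen_gt0 th). Qed.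

Lemma P_nest_eq0 th k : nest_sum alpha lam eta th k = 0 -> P_nest alpha lam eta th k = 0.
Proof. by move=> S0; rewrite /P_nest /nest_weight S0 powR0 ?mul0r ?gt_eqF. Qed.

Lemma nest_cond_ge0 th i k : 0 <= nest_cond th i k.
Proof.
rewrite /nest_cond; case: ifP => _; first by rewrite invr_ge0 ler0n.
by rewrite divr_ge0 ?powR_ge0 //; apply: sumr_ge0 => j _; apply: powR_ge0.
Qed.

Lemma nest_cond_sum1 th k : \sum_(i < N) nest_cond th i k = 1.
Proof.
rewrite /nest_cond; case: eqP => [_|/eqP S_neq0].
  by rewrite sumr_const card_ord -[_ *+ N]mulr_natr mulVf // pnatr_eq0 -lt0n.
by rewrite /P_cond -mulr_suml divff.
Qed.

Lemma gnl_choiceE th j :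
  gnl_choice alpha lam eta th j = \sum_(k < K) P_nest alpha lam eta th k * nest_cond th j k.
Proof.
apply: eq_bigr => k _; rewrite /nest_cond.
by case: eqP => [/P_nest_eq0 ->|]; rewrite ?mul0r.
Qed.

Lemma nest_sum_shift th v k :
  nest_sum alpha lam eta (fun i => th i + v i) k = nest_sum alpha lam eta th k *
    \sum_(i < N) nest_cond th i k * expR (v i / eta / lam k).
Proof.
have termE i : powR (alpha i k * expR ((th i + v i) / eta)) (lam k)^-1
    = powR (alpha i k * expR (th i / eta)) (lam k)^-1 * expR (v i / eta / lam k).
  by rewrite mulrDl expRD mulrA powRM ?mulr_ge0 ?expR_ge0 // -expRM.
rewrite /nest_cond; case: eqP => [S0|/eqP S_neq0].
  rewrite S0 mul0r /nest_sum (eq_bigr _ (fun i _ => termE i)) big1 // => i _.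
  by rewrite (psumr_eq0P (fun j _ => powR_ge0 _ _) S0) ?mul0r.
rewrite mulr_sumr {1}/nest_sum; apply: eq_bigr => i _.
by rewrite termE /P_cond mulrA mulrCA divff ?mulr1.
Qed.

Lemma nest_weight_shift th v k :
  nest_weight alpha lam eta (fun i => th i + v i) k = nest_weight alpha lam eta th k *
    expR (lam k * ln (\sum_(i < N) nest_cond th i k * expR (v i / eta / lam k))).
Proof.
have E_gt0 := sum_mul_expR_gt0 (fun i => v i / eta / lam k)
  (fun i => nest_cond_ge0 th i k) (nest_cond_sum1 th k).
rewrite /nest_weight nest_sum_shift powRM ?(ltW E_gt0) //; last first.
  by apply: sumr_ge0 => i _; apply: powR_ge0.
by congr (_ * _); rewrite -[X in powR X _]lnK ?posrE // -expRM mulrC.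
Qed.

Lemma gnl_gen_shift th v :
  gnl_gen (fun i => th i + v i) = gnl_gen th * \sum_(k < K) P_nest alpha lam eta th k *
    expR (lam k * ln (\sum_(i < N) nest_cond th i k * expR (v i / eta / lam k))).
Proof.
rewrite mulr_sumr; apply: eq_bigr => k _.
by rewrite nest_weight_shift mulrA mulrCA divff ?mulr1 ?gt_eqF ?(gnl_gen_gt0 th).
Qed.

Lemma sum_gnl_choice_mul th w : \sum_(j < N) gnl_choice alpha lam eta th j * w j =
  \sum_(k < K) P_nest alpha lam eta th k * \sum_(i < N) nest_cond th i k * w i.
Proof.
under eq_bigr do rewrite gnl_choiceE mulr_suml.
rewrite exchange_big; apply: eq_bigr => k _ /=; rewrite mulr_sumr.
by apply: eq_bigr => i _; rewrite mulrA.
Qed.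

Lemma gnl_psi_shift_le th v l m :
  0 < l -> (forall k, l <= lam k) -> (forall i, `|v i| <= m) ->
  gnl_psi (fun i => th i + v i) <=
  gnl_psi th + \sum_(j < N) gnl_choice alpha lam eta th j * v j + m ^+ 2 / (2 * l * eta).
Proof.
move=> l_gt0 l_le_lam v_le.
have c_le i : `|v i / eta| <= m / eta.
  by rewrite normrM normfV (gtr0_norm eta_gt0) ler_pM2r ?invr_gt0.
have := ln_mix_le (P_nest_ge0 th) (P_nest_sum1 th) (nest_cond_ge0 th) (nest_cond_sum1 th)
  l_gt0 l_le_lam lam_le1 c_le.
rewrite -(ler_pM2l eta_gt0) => mix_le.
rewrite /gnl_psi gnl_gen_shift lnM ?posrE ?gnl_gen_gt0 //; last first.
  exact: sum_mul_expR_gt0 (P_nest_ge0 th) (P_nest_sum1 th).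
rewrite mulrDr -addrA lerD2l (le_trans mix_le) // sum_gnl_choice_mul.
have -> :
    \sum_(k < K) P_nest alpha lam eta th k * \sum_(i < N) nest_cond th i k * (v i / eta) =
    (\sum_(k < K) P_nest alpha lam eta th k * \sum_(i < N) nest_cond th i k * v i) / eta.
  rewrite mulr_suml; apply: eq_bigr => k _; rewrite -mulrA mulr_suml.
  by congr (_ * _); apply: eq_bigr => i _; rewrite mulrA.
by rewrite le_eqVlt; apply/orP; left; apply/eqP; field; rewrite !gt_eqF.
Qed.

Lemma gnl_psi_theta_le (u : nat -> 'I_N -> R) T l m n :
  0 < l -> (forall k, l <= lam k) -> (forall t i, (1 <= t <= T)%N -> `|u t i| <= m) ->
  (n <= T)%N ->
  gnl_psi (theta u n) <= gnl_psi (fun=> 0) +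
    \sum_(1 <= t < n.+1) inner (u t) (gnl_ssa alpha lam eta u t) +
    n%:R * (m ^+ 2 / (2 * l * eta)).
Proof.
move=> l_gt0 l_le_lam u_le; elim: n => [_|n IHn nT].
  have -> : theta u 0 = fun=> 0 by apply/funext => i; rewrite /theta big_geq.
  by rewrite big_geq // mul0r !addr0.
have -> : theta u n.+1 = fun i => theta u n i + u n.+1 i.
  by apply/funext => i; rewrite /theta big_nat_recr.
have v_le i : `|u n.+1 i| <= m by apply: u_le.
apply: le_trans (gnl_psi_shift_le (theta u n) l_gt0 l_le_lam v_le) _.
have -> : \sum_(j < N) gnl_choice alpha lam eta (theta u n) j * u n.+1 j
    = inner (u n.+1) (gnl_ssa alpha lam eta u n.+1).
  by apply: eq_bigr => j _; rewrite mulrC.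
apply: le_trans (lerD (lerD (IHn (ltnW nT)) (lexx _)) (lexx _)) _.
have regroup (P0 S I D : R) k : P0 + S + k%:R * D + I + D <= P0 + (S + I) + k.+1%:R * D.
  by rewrite -natr1 le_eqVlt; apply/orP; left; apply/eqP; ring.
by rewrite [in leRHS]big_nat_recr //=; apply: regroup.
Qed.

End GNLPotential.

Lemma inner_simplex_le (R : realType) N (a x : 'I_N -> R) b :
  in_simplex x -> (forall j, a j <= b) -> inner a x <= b.
Proof.
move=> [x_ge0 x_sum1] a_le; rewrite -[leRHS]mulr1 -x_sum1 mulr_sumr.
by apply: ler_sum => j _; rewrite ler_wpM2r.
Qed.

Lemma regret_le_trans (R : realType) N T (u : nat -> 'I_N -> R) xs B B' :
  regret_le T u xs B -> B <= B' -> regret_le T u xs B'.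
Proof. by move=> uB BB' x /uB /le_trans; apply. Qed.

Lemma regret_le_payoffs0 (R : realType) N T (u : nat -> 'I_N -> R) xs :
  (forall t i, (1 <= t <= T)%N -> u t i = 0) -> regret_le T u xs 0.
Proof.
move=> u0 x _; rewrite subr_le0 le_eqVlt; apply/orP; left; apply/eqP.
rewrite /inner big1 => [|i _]; last by rewrite /theta big_nat big1 ?mul0r // => t /u0.
rewrite big_nat big1 // => t /u0 ut0.
by rewrite big1 // => i _; rewrite ut0 mul0r.
Qed.

Lemma gnl_ssa_regret_le (R : realType) N K T (alpha : 'I_N -> 'I_K -> R) (lam : 'I_K -> R)
    (u : nat -> 'I_N -> R) (eta l umax : R) :
  (forall k, 0 < lam k) -> (forall k, lam k <= 1) ->
  (forall i k, 0 <= alpha i k) -> (forall i, \sum_(k < K) alpha i k = 1) ->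
  (0 < N)%N -> 0 < eta -> 0 < l -> (forall k, l <= lam k) ->
  (forall t i, (1 <= t <= T)%N -> `|u t i| <= umax) ->
  regret_le T u (gnl_ssa alpha lam eta u)
    (eta * ln N%:R + T%:R * (umax ^+ 2 / (2 * l * eta))).
Proof.
move=> lam_gt0 lam_le1 alpha_ge0 alpha_sum1 N_gt0 eta_gt0 l_gt0 l_le_lam u_le x x_simplex.
rewrite lerBlDr.
have psi_ge := le_gnl_psi lam_gt0 alpha_ge0 alpha_sum1 N_gt0 eta_gt0 (theta u T).
apply: le_trans (inner_simplex_le x_simplex psi_ge) _.
apply: le_trans (gnl_psi_theta_le lam_gt0 lam_le1 alpha_ge0 alpha_sum1 N_gt0 eta_gt0
  l_gt0 l_le_lam u_le (leqnn T)) _.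
by rewrite [leLHS]addrAC !lerD2r gnl_psi0_le.
Qed.

Lemma sqrt_tuning (R : rcfType) (a b : R) : 0 < a -> 0 < b ->
  Num.sqrt (a / b) * b + a / Num.sqrt (a / b) = 2 * Num.sqrt (a * b).
Proof.
move=> a_gt0 b_gt0; set s := Num.sqrt (a / b).
have s_gt0 : 0 < s by rewrite sqrtr_gt0 divr_gt0.
have aE : a = s ^+ 2 * b by rewrite sqr_sqrtr ?divfK ?gt_eqF // ltW ?divr_gt0.
have -> : Num.sqrt (a * b) = s * b.
  by rewrite aE -mulrA -expr2 -exprMn sqrtr_sqr gtr0_norm ?mulr_gt0.
by rewrite aE; field; rewrite gt_eqF.
Qed.

Lemma eta_tuning (R : rcfType) (c L T m : R) : 0 < c -> 0 < L -> 0 < T -> 0 < m ->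
  let eta := Num.sqrt (c * T * m ^+ 2 / (2 * L)) in
  eta * L + c * T * m ^+ 2 / 2 / eta = m * Num.sqrt (2 * L * c * T).
Proof.
move=> c_gt0 L_gt0 T_gt0 m_gt0 eta; set a := c * T * m ^+ 2 / 2.
have a_gt0 : 0 < a by rewrite divr_gt0 ?mulr_gt0 ?exprn_gt0.
have -> : eta = Num.sqrt (a / L) by rewrite /eta /a; congr Num.sqrt; field; rewrite gt_eqF.
rewrite sqrt_tuning //; apply: (@pexpIrn _ 2) => //; rewrite ?nnegrE.
- by rewrite mulr_ge0 ?sqrtr_ge0.
- by rewrite mulr_ge0 ?sqrtr_ge0 ?ltW.
rewrite !exprMn !sqr_sqrtr ?(mulr_ge0 (ltW a_gt0) (ltW L_gt0)) //.
  by rewrite /a; field.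
by rewrite !mulr_ge0 // ltW.
Qed.

Theorem proposition2 (R : realType) (N K T : nat)
  (alpha : 'I_N -> 'I_K -> R) (lam : 'I_K -> R)
  (u : nat -> 'I_N -> R) (umax : R) :
  (2 <= N)%N -> (1 <= K)%N -> (1 <= T)%N ->
  (forall k, 0 < lam k <= 1) ->
  (forall i k, 0 <= alpha i k) ->
  (forall i, \sum_(k < K) alpha i k = 1) ->
  (forall t i, (1 <= t <= T)%N -> `|u t i| <= umax) ->
  let lmin := \big[Num.min/1]_(k < K) lam k in
  let eta := Num.sqrt (((2 / lmin - 1) * T%:R * umax ^+ 2) / (2 * ln N%:R)) in
  regret_le T u (gnl_ssa alpha lam eta u)
    (umax * Num.sqrt (2 * ln N%:R * (2 / lmin - 1) * T%:R)).
Proof.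
move=> N2 _ T1 lam01 alpha_ge0 alpha_sum1 u_le lmin eta.
have lam_gt0 k : 0 < lam k by case/andP: (lam01 k).
have lam_le1 k : lam k <= 1 by case/andP: (lam01 k).
have lmin_le k : lmin <= lam k by exact: bigmin_le.
have lmin_gt0 : 0 < lmin by apply: lt_bigmin.
have N_gt0 : (0 < N)%N by exact: leq_trans N2.
have umax_ge0 : 0 <= umax := le_trans (normr_ge0 _) (u_le 1%N (Ordinal N_gt0) T1).
have [umax0|umax_neq0] := eqVneq umax 0.
  rewrite umax0 mul0r; apply: regret_le_payoffs0 => t i ti.
  by apply/eqP; rewrite -normr_le0 -umax0 u_le.
have umax_gt0 : 0 < umax by rewrite lt_def umax_neq0.
have L_gt0 : 0 < ln N%:R :> R by rewrite ln_gt0 // ltr1n.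
have lmin_inv_le : lmin^-1 <= 2 / lmin - 1.
  have : 1 <= lmin^-1 by rewrite invf_ge1 // bigmin_le_id.
  rewrite mulrC mulr_natr mulr2n; move: (lmin^-1) => r; lra.
have c_gt0 : 0 < 2 / lmin - 1 by apply: lt_le_trans lmin_inv_le; rewrite invr_gt0.
have eta_gt0 : 0 < eta by rewrite sqrtr_gt0 divr_gt0 ?mulr_gt0 ?exprn_gt0 ?ltr0n.
have T_gt0 : 0 < T%:R :> R by rewrite ltr0n.
apply: regret_le_trans (gnl_ssa_regret_le lam_gt0 lam_le1 alpha_ge0 alpha_sum1 N_gt0 eta_gt0
  lmin_gt0 lmin_le u_le) _.
rewrite -(eta_tuning c_gt0 L_gt0 T_gt0 umax_gt0) -/eta lerD2l.
have -> : T%:R * (umax ^+ 2 / (2 * lmin * eta)) = T%:R * umax ^+ 2 / 2 / eta * lmin^-1.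
  by field; rewrite !gt_eqF.
rewrite [leRHS](_ : _ = T%:R * umax ^+ 2 / 2 / eta * (2 / lmin - 1)); last by ring.
by rewrite ler_wpM2l // !divr_ge0 ?mulr_ge0 ?sqr_ge0 ?ltW.
Qed.
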